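(* Let $(X,d)$ be a metric space and let $U\subseteq F_{USCG}(X)$. Then $U$ is relatively compact in $(F_{USCG}(X),H_{\rm end})$ if and only if $U(\alpha)=\bigcup_{u\in U}[u]_\alpha$ is relatively compact in $X$ for each $\alpha\in(0,1]$.
   Context: A fuzzy set on $X$ is a function $u:X\to[0,1]$, with $\alpha$-cuts $[u]_\alpha=\{x: u(x)\ge\alpha\}$ for $\alpha\in(0,1]$ and $[u]_0=\overline{\{u>0\}}$. $F_{USC}(X)$ is the set of fuzzy sets with all $\alpha$-cuts ($\alpha\in[0,1]$) non-empty and closed; $F_{USCG}(X)=\{u\in F_{USC}(X): [u]_\alpha\text{ compact for all }\alpha\in(0,1]\}$. $X\times[0,1]$ is metrized by $\overline{d}((x,\alpha),(y,\beta))=d(x,y)+|\alpha-\beta|$; ${\rm end}\,u=\{(x,t)\in X\times[0,1]: u(x)\ge t\}$; $H_{\rm end}(u,v)=H({\rm end}\,u,{\rm end}\,v)$ where $H$ is the Hausdorff distance $H(A,B)=\max\{\sup_{a\in A}\inf_{b\in B}\overline{d}(a,b),\sup_{b\in B}\inf_{a\in A}\overline{d}(a,b)\}$. *)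

From HB Require Import structures.
From mathcomp Require Import all_boot all_order all_algebra.
From mathcomp Require Import all_classical all_reals ereal.
Set Implicit Arguments. Unset Strict Implicit. Unset Printing Implicit Defensive.
Import Order.TTheory GRing.Theory Num.Theory.
Local Open Scope classical_set_scope.
Local Open Scope ring_scope.

Section MetricNotions.
Variable R : realType.

Definition is_metric (X : Type) (d : X -> X -> R) : Prop :=
  (forall x y, d x y = 0 <-> x = y) /\
  (forall x y, d x y = d y x) /\
  (forall x y z, d x z <= d x y + d y z).

Definition dopen (T : Type) (D : T -> T -> \bar R) (A : set T) : Prop :=
  forall x, A x -> exists e : R, 0 < e /\ [set y | (D x y < e%:E)%E] `<=` A.

Definition dclosed (T : Type) (D : T -> T -> \bar R) (A : set T) : Prop :=
  dopen D (~` A).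

Definition dclosure (T : Type) (D : T -> T -> \bar R) (A : set T) : set T :=
  [set x | forall e : R, 0 < e -> exists y, A y /\ (D x y < e%:E)%E].

Definition dcompact (T : Type) (D : T -> T -> \bar R) (K : set T) : Prop :=
  forall (I : Type) (G : I -> set T), (forall i, dopen D (G i)) ->
    K `<=` \bigcup_i G i ->
    exists F : set I, finite_set F /\ K `<=` \bigcup_(i in F) G i.

Definition drelcompact (T : Type) (D : T -> T -> \bar R) (A : set T) : Prop :=
  dcompact D (dclosure D A).

Variables (X : Type) (d : X -> X -> R).

Definition dE : X -> X -> \bar R := fun x y => (d x y)%:E.

Definition fuzzy_set (u : X -> R) : Prop := forall x, 0 <= u x <= 1.

Definition cut (u : X -> R) (a : R) : set X :=
  if a == 0 then dclosure dE [set x | 0 < u x] else [set x | a <= u x].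

Definition F_USC (u : X -> R) : Prop :=
  fuzzy_set u /\
  (forall a : R, 0 <= a <= 1 -> cut u a !=set0 /\ dclosed dE (cut u a)).

Definition F_USCG (u : X -> R) : Prop :=
  F_USC u /\ (forall a : R, 0 < a <= 1 -> dcompact dE (cut u a)).

Definition FUSCG := {u : X -> R | F_USCG u}.

Definition endo (u : X -> R) : set (X * R) :=
  [set p | 0 <= p.2 <= 1 /\ p.2 <= u p.1].

Definition dbar (p q : X * R) : R := d p.1 q.1 + `|p.2 - q.2|.

Definition hexcess (A B : set (X * R)) : \bar R :=
  ereal_sup [set ereal_inf [set (dbar a b)%:E | b in B] | a in A].

Definition Hausdorff (A B : set (X * R)) : \bar R :=
  Order.max (hexcess A B) (hexcess B A).

Definition H_end (u v : X -> R) : \bar R := Hausdorff (endo u) (endo v).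

Definition H_end_FUSCG (u v : FUSCG) : \bar R := H_end (proj1_sig u) (proj1_sig v).

Definition Ucut (U : set FUSCG) (a : R) : set X :=
  \bigcup_(u in U) cut (proj1_sig u) a.

End MetricNotions.

(* Relative compactness, both for the distance on X and for H_end on
   F_USCG(X), amounts to every sequence having a cluster point, and H_end is a
   pseudometric on F_USCG(X) with values in [0, 1].  If U is relatively
   compact and x_n lies in the a-cut of some u_n in U, then for a cluster point
   u of (u_n) the points (x_n, a) lie close to the endograph of u, so the x_n
   cluster in the compact cut [u]_(a/2).  Conversely, if every U(a) is
   relatively compact, U is totally bounded (cover U(e) by a finite e-net and
   record which heights j e each u reaches near each net point) and complete:
   a Cauchy sequence converges to the fuzzy set whose endograph is the upper
   Kuratowski limit of the endographs, whose cuts are relatively compact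
   because they lie close to the sets U(a). *)

From mathcomp Require Import all_boot all_order all_algebra.
From mathcomp Require Import all_classical all_reals ereal.
From mathcomp Require Import lra.
Import Order.TTheory GRing.Theory Num.Theory.
Local Open Scope classical_set_scope.
Local Open Scope ring_scope.

Set Implicit Arguments. Unset Strict Implicit. Unset Printing Implicit Defensive.

Definition invS {R : realType} (k : nat) : R := k.+1%:R^-1.

Lemma invS_gt0 {R : realType} k : 0 < invS k :> R.
Proof. by rewrite invr_gt0 ltr0n. Qed.

Lemma invS_le {R : realType} m n : (n <= m)%N -> invS m <= invS n :> R.
Proof. by move=> nm; rewrite lef_pV2 ?posrE ?ltr0n // ler_nat ltnS. Qed.

Lemma invS_small {R : realType} (e : R) : 0 < e ->
  exists k0, forall k, (k0 <= k)%N -> invS k < e.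
Proof.
move=> e0; exists (Num.bound e^-1) => k k0k; apply: le_lt_trans (invS_le k0k) _.
have : 0 <= e^-1 by rewrite invr_ge0 ltW.
move=> /archi_boundP lt_bound; rewrite /invS invf_plt ?posrE ?ltr0n //.
by apply: lt_le_trans lt_bound _; rewrite ler_nat.
Qed.

Lemma exists_pos_le2 {R : realType} (a b : R) : 0 < a -> 0 < b ->
  exists c, [/\ 0 < c, c <= a & c <= b].
Proof.
by move=> a0 b0; exists (Num.min a b); rewrite lt_min a0 b0 !ge_min !lexx ?orbT.
Qed.

Lemma finite_image_bounded (I : Type) (F : set I) (g : I -> nat) :
  finite_set F -> exists M, forall i, F i -> (g i <= M)%N.
Proof.
move=> /(finite_image g) /finite_fsetP [B gFB].
exists (\max_(j <- finmap.enum_fset B) j)%N => i Fi.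
have : (g @` F) (g i) by exists i.
by rewrite gFB => iB; exact: (@leq_bigmax_seq _ _ xpredT id).
Qed.

Section PseudoMetric.
Variables (R : realType) (T : Type) (dl : T -> T -> R).
Hypotheses (dl0 : forall x, dl x x = 0) (dlC : forall x y, dl x y = dl y x)
  (dlT : forall x y z, dl x z <= dl x y + dl y z).

Local Notation D := (dE dl).

Lemma dE_ltE x y e : (D x y < e%:E)%E = (dl x y < e).
Proof. by rewrite /dE lte_fin. Qed.

Lemma dl_ge0 x y : 0 <= dl x y.
Proof. by have := dlT x y x; rewrite dl0 (dlC y x); lra. Qed.

Lemma dopen_ball x r : dopen D [set y | dl x y < r].
Proof.
move=> y /= xy; exists (r - dl x y); split; first by rewrite subr_gt0.
by move=> z /=; rewrite dE_ltE => yz; have := dlT x y z; lra.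
Qed.

Lemma dclosureP A x :
  dclosure D A x <-> forall e, 0 < e -> exists y, A y /\ dl x y < e.
Proof. by []. Qed.

Lemma sub_dclosure A : A `<=` dclosure D A.
Proof. by move=> x Ax e e0; exists x; rewrite dE_ltE dl0. Qed.

Lemma dclosure_closed A : dclosed D (dclosure D A).
Proof.
move=> x Ax_far.
have [e [e0 Ae]] : exists e, 0 < e /\ forall y, A y -> e <= dl x y.
  apply: contrapT => near; apply: Ax_far => e e0; apply: contrapT => far.
  apply: near; exists e; split => // y Ay; rewrite leNgt; apply/negP => xy.
  by apply: far; exists y; rewrite dE_ltE.
exists (e / 2); split; first by rewrite divr_gt0.
move=> z /=; rewrite dE_ltE => xz /dclosureP /(_ (e / 2)) [|y [Ay zy]].
  by rewrite divr_gt0.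
by have := Ae _ Ay; have := dlT x z y; lra.
Qed.

Lemma dclosed_dclosureE C : dclosed D C -> dclosure D C = C.
Proof.
move=> Cc; apply/seteqP; split; last exact: sub_dclosure.
move=> x /dclosureP Cx; apply: contrapT => nCx.
have [e [e0 ball_nC]] := Cc x nCx; have [y [Cy xy]] := Cx _ e0.
by apply: (ball_nC y) => //=; rewrite dE_ltE.
Qed.

Definition dcluster (x : nat -> T) y :=
  forall e, 0 < e -> forall N, exists n, (N <= n)%N /\ dl (x n) y < e.

Definition dcvg (x : nat -> T) y :=
  forall e, 0 < e -> exists N, forall n, (N <= n)%N -> dl (x n) y < e.

Definition dcauchy (x : nat -> T) := forall e, 0 < e ->
  exists N, forall m n, (N <= m)%N -> (N <= n)%N -> dl (x m) (x n) < e.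

Definition dseq_relcompact (A : set T) :=
  forall x : nat -> T, (forall n, A (x n)) -> exists y, dcluster x y.

Definition dcomplete_in (A : set T) :=
  forall x : nat -> T, (forall n, A (x n)) -> dcauchy x -> exists y, dcvg x y.

Definition dtotally_bounded (A : set T) := forall r, 0 < r ->
  exists l : seq T, forall x, A x -> has (fun p => dl p x < r) l.

Definition finitely_covered (I : Type) (G : I -> set T) (S : set T) :=
  exists F : set I, finite_set F /\ S `<=` \bigcup_(i in F) G i.

Lemma dcluster_shadow (x y : nat -> T) (n : nat -> nat) z :
  (forall k, (k <= n k)%N /\ dl (x (n k)) (y k) < invS k) ->
  dcluster y z -> dcluster x z.
Proof.
move=> xy yz e e0 N; have e2 : 0 < e / 2 by rewrite divr_gt0.
have [k0 k0_small] := invS_small e2.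
have [k [Nk yk]] := yz _ e2 (maxn N k0); have [kn xyk] := xy k.
exists (n k); split; first by apply: leq_trans kn; apply: leq_trans Nk; exact: leq_maxl.
have := k0_small k (leq_trans (leq_maxr _ _) Nk).
by have := dlT (x (n k)) (y k) z; lra.
Qed.

Lemma dcompact_cluster K : dcompact D K ->
  forall x : nat -> T, (forall n, K (x n)) -> exists y, K y /\ dcluster x y.
Proof.
move=> cK x Kx; apply: contrapT => no_cluster.
have far y : exists eN : R * nat, K y ->
    0 < eN.1 /\ forall n, (eN.2 <= n)%N -> eN.1 <= dl (x n) y.
  apply: contrapT => near; apply: no_cluster; exists y.
  have Ky : K y by apply: contrapT => nKy; apply: near; exists (1, 0%N).
  split => // e e0 N; apply: contrapT => far; apply: near; exists (e, N) => _.
  split => // n Nn; rewrite leNgt; apply/negP => xny; apply: far; by exists n.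
have [eN heN] := choice far.
pose G y := [set z | K y /\ dl y z < (eN y).1].
have [F [finF KF]] : finitely_covered G K.
  apply: cK => [y z [Ky yz]|z Kz].
    have [e [e0 ball_sub]] := dopen_ball yz.
    by exists e; split => // w /ball_sub.
  by exists z => //; split => //; rewrite dl0; case: (heN z Kz).
have [M MF] := finite_image_bounded (fun y => (eN y).2) finF.
have [y Fy [Ky yxM]] := KF _ (Kx M).
by have := (heN y Ky).2 M (MF y Fy); rewrite dlC; lra.
Qed.

Lemma drelcompact_seq A : drelcompact D A -> dseq_relcompact A.
Proof.
move=> cA x Ax; have [y [_ xy]] := dcompact_cluster cA (fun n => sub_dclosure (Ax n)).
by exists y.
Qed.

Lemma dseq_relcompact_complete A : dseq_relcompact A -> dcomplete_in A.
Proof.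
move=> sA x Ax cx; have [y xy] := sA x Ax; exists y => e e0.
have e2 : 0 < e / 2 by rewrite divr_gt0.
have [N HN] := cx _ e2; exists N => m Nm; have [n [Nn xny]] := xy _ e2 N.
by have := HN m n Nm Nn; have := dlT (x m) (x n) y; lra.
Qed.

(* A greedy [r]-separated sequence in [A] has no cluster point. *)
Lemma dseq_relcompact_totally_bounded A : dseq_relcompact A -> dtotally_bounded A.
Proof.
move=> sA r r0; apply: contrapT => no_net.
have next (l : seq T) : exists x, A x /\ ~~ has (fun p => dl p x < r) l.
  apply: contrapT => covered; apply: no_net; exists l => x Ax.
  by apply: contrapT => /negP nx; apply: covered; exists x.
have [g hg] := choice next.
pose s := fix s n : seq T := if n is n'.+1 then g (s n') :: s n' else [::].
pose x n := g (s n).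
have in_s k m : (k < m)%N -> forall P : pred T, P (x k) -> has P (s m).
  elim: m => [//|m IH]; rewrite ltnS leq_eqVlt => /orP [/eqP -> P Pk|km P Pk] /=.
    by rewrite Pk.
  by rewrite IH ?orbT.
have sep k n : (k < n)%N -> r <= dl (x k) (x n).
  move=> kn; rewrite leNgt; apply/negP => close; have [_ /negP] := hg (s n); apply.
  exact: (in_s k n kn (fun p => dl p (x n) < r)).
have [y xy] := sA x (fun n => (hg (s n)).1).
have r2 : 0 < r / 2 by rewrite divr_gt0.
have [n1 [_ x1y]] := xy _ r2 0%N; have [n2 [n12 x2y]] := xy _ r2 n1.+1.
by have := sep n1 n2 n12; have := dlT (x n1) y (x n2); rewrite (dlC y); lra.
Qed.

Lemma sub_finitely_covered I (G : I -> set T) S1 S2 :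
  S1 `<=` S2 -> finitely_covered G S2 -> finitely_covered G S1.
Proof. by move=> S12 [F [finF S2F]]; exists F; split => // z /S12 /S2F. Qed.

Lemma finitely_coveredU I (G : I -> set T) S1 S2 :
  finitely_covered G S1 -> finitely_covered G S2 -> finitely_covered G (S1 `|` S2).
Proof.
move=> [F1 [fF1 S1F]] [F2 [fF2 S2F]]; exists (F1 `|` F2).
split; first by rewrite finite_setU.
by move=> z [/S1F|/S2F] [i Fi Gi]; exists i => //; [left|right].
Qed.

Lemma uncovered_nonempty I (G : I -> set T) S : ~ finitely_covered G S -> S !=set0.
Proof.
move=> nS; apply: contrapT => S0; apply: nS; exists set0; split; first exact: finite_set0.
by move=> z Sz; case: S0; exists z.
Qed.

Lemma uncovered_ball A I (G : I -> set T) S r :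
  dtotally_bounded A -> 0 < r -> S `<=` dclosure D A -> ~ finitely_covered G S ->
  exists p, ~ finitely_covered G (S `&` [set z | dl p z < r]).
Proof.
move=> tA r0 SA nS; apply: contrapT => all_covered; apply: nS.
have pieceP p : finitely_covered G (S `&` [set z | dl p z < r]).
  by apply: contrapT => np; apply: all_covered; exists p.
have r2 : 0 < r / 2 by rewrite divr_gt0.
have [l net] := tA _ r2.
have : finitely_covered G (S `&` [set z | has (fun p => dl p z < r) l]).
  elim: l {net} => [|p l IH].
    by exists set0; split; [exact: finite_set0|move=> z []].
  apply: sub_finitely_covered (finitely_coveredU (pieceP p) IH).
  by move=> z [Sz /= /orP [pz|lz]]; [left|right].
apply: sub_finitely_covered => z Sz; split => //.
have /dclosureP/(_ _ r2) [a [Aa za]] := SA z Sz.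
by apply: sub_has (net a Aa) => p /= pa; have := dlT p a z; rewrite (dlC a z); lra.
Qed.

Lemma uncovered_nested_balls A I (G : I -> set T) :
  dtotally_bounded A -> ~ finitely_covered G (dclosure D A) ->
  exists (S : nat -> set T) (p : nat -> T), [/\ forall k, S k `<=` dclosure D A,
    forall k, S k.+1 `<=` S k, forall k, S k.+1 `<=` [set z | dl (p k) z < invS k]
    & forall k, ~ finitely_covered G (S k)].
Proof.
move=> tA nK; set K := dclosure D A in nK *.
have [t0 _] := uncovered_nonempty nK.
have step (Sk : set T * nat) : exists p, Sk.1 `<=` K -> ~ finitely_covered G Sk.1 ->
    ~ finitely_covered G (Sk.1 `&` [set z | dl p z < invS Sk.2]).
  case: (pselect (Sk.1 `<=` K /\ ~ finitely_covered G Sk.1)) => [[SK nS]|no].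
    by have [p ?] := uncovered_ball tA (invS_gt0 Sk.2) SK nS; exists p.
  by exists t0 => SK nS; case: no.
have [p hp] := choice step.
pose S := fix S k := if k is k'.+1 then S k' `&` [set z | dl (p (S k', k')) z < invS k']
  else K.
have SK k : S k `<=` K /\ ~ finitely_covered G (S k).
  elim: k => [|k [SK nS]]; first by split.
  by split; [move=> z [/SK]|exact: (hp (S k, k) SK nS)].
by exists S, (fun k => p (S k, k)); split=> [k|k z []|k z []|k] //; case: (SK k).
Qed.

(* The points of the nested sets, pushed into [A], form a Cauchy sequence;
   its limit lies in some [G i], which then swallows a whole [S k]. *)
Lemma nested_balls_inside A I (G : I -> set T) (S : nat -> set T) (p : nat -> T) :
  dcomplete_in A -> (forall i, dopen D (G i)) -> dclosure D A `<=` \bigcup_i G i ->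
  (forall k, S k `<=` dclosure D A) -> (forall k, S k.+1 `<=` S k) ->
  (forall k, S k.+1 `<=` [set z | dl (p k) z < invS k]) -> (forall k, S k !=set0) ->
  exists k i, S k `<=` G i.
Proof.
move=> cA oG cov SA Sdec Sball Sne.
have Smono m n : (n <= m)%N -> S m `<=` S n.
  elim: m => [|m IH]; first by rewrite leqn0 => /eqP ->.
  by rewrite leq_eqVlt => /orP [/eqP ->//|/IH nm z /Sdec /nm].
have [q Sq] := choice Sne.
have [a qa] := choice (fun k => (dclosureP _ _).1 (SA _ _ (Sq k)) _ (invS_gt0 k)).
have a_cauchy : dcauchy a.
  move=> e e0; have e4 : 0 < e / 4 by rewrite divr_gt0.
  have [k0 k0_small] := invS_small e4; exists k0.+1 => m n k0m k0n.
  have /Sball /= qm := Smono _ _ k0m _ (Sq m).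
  have /Sball /= qn := Smono _ _ k0n _ (Sq n).
  have := k0_small m (ltnW k0m); have := k0_small n (ltnW k0n).
  have := k0_small k0 (leqnn _); have := (qa m).2; have := (qa n).2.
  have := dlT (a m) (q m) (a n); have := dlT (q m) (q n) (a n).
  have := dlT (q m) (p k0) (q n); rewrite (dlC (a m) (q m)) (dlC (q m) (p k0)); lra.
have [y ay] := cA a (fun k => (qa k).1) a_cauchy.
have [i _ Giy] : (\bigcup_i G i) y.
  apply: cov => e e0; have [N aN] := ay e e0.
  by exists (a N); split; [exact: (qa N).1|rewrite dE_ltE dlC; exact: aN].
have [eps [eps0 ball_Gi]] := oG i y Giy; have e4 : 0 < eps / 4 by rewrite divr_gt0.
have [k1 k1_small] := invS_small e4; have [N2 aN2] := ay _ e4.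
pose k := maxn k1 N2; exists k.+1, i => z Sz; apply: ball_Gi; rewrite /= dE_ltE.
have /= := Sball k _ Sz; have /= := Sball k _ (Sq k.+1); have := (qa k.+1).2.
have := aN2 k.+1 (leq_trans (leq_maxr _ _) (leqnSn _)).
have := k1_small k (leq_maxl _ _); have := invS_le (R := R) (leqnSn k).
have := dlT y (a k.+1) z; have := dlT (a k.+1) (q k.+1) z.
have := dlT (q k.+1) (p k) z.
by rewrite (dlC (a k.+1) y) (dlC (a k.+1) (q k.+1)) (dlC (q k.+1) (p k)); lra.
Qed.

Lemma dtotally_bounded_complete_relcompact A :
  dtotally_bounded A -> dcomplete_in A -> drelcompact D A.
Proof.
move=> tA cA I G oG cov; apply: contrapT => nK.
have [S [p [SA Sdec Sball nS]]] := uncovered_nested_balls tA nK.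
have [k [i Ski]] := nested_balls_inside cA oG cov SA Sdec Sball
  (fun k => uncovered_nonempty (nS k)).
by apply: (nS k); exists [set i]; split; [exact: finite_set1|move=> z /Ski; exists i].
Qed.

Lemma drelcompact_seqP A : drelcompact D A <-> dseq_relcompact A.
Proof.
split; first exact: drelcompact_seq.
move=> sA; apply: dtotally_bounded_complete_relcompact.
  exact: dseq_relcompact_totally_bounded.
exact: dseq_relcompact_complete.
Qed.

End PseudoMetric.

Section Endographs.
Variables (R : realType) (X : Type) (d : X -> X -> R).
Hypotheses (d0 : forall x, d x x = 0) (dC : forall x y, d x y = d y x)
  (dT : forall x y z, d x z <= d x y + d y z).

Lemma dbarE x t y s : dbar d (x, t) (y, s) = d x y + `|t - s|.
Proof. by []. Qed.

Lemma dbar_ge0 p q : 0 <= dbar d p q.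
Proof. by rewrite addr_ge0 ?(dl_ge0 d0 dC dT). Qed.

Lemma dbar0 p : dbar d p p = 0.
Proof. by rewrite /dbar d0 subrr normr0 addr0. Qed.

Lemma dbarT p q r : dbar d p r <= dbar d p q + dbar d q r.
Proof. by rewrite /dbar; have := dT p.1 q.1 r.1; have := ler_distD q.2 p.2 r.2; lra. Qed.

Lemma dbar_vertical x t s : dbar d (x, t) (x, s) = `|t - s|.
Proof. by rewrite dbarE d0 add0r. Qed.

Lemma dbar_lt x t y s e : dbar d (x, t) (y, s) < e -> d x y < e /\ t - e < s.
Proof.
rewrite dbarE => lt; have := ler_norm (t - s); have := normr_ge0 (t - s).
by have := dl_ge0 d0 dC dT x y; lra.
Qed.

Definition excess_within (A B : set (X * R)) (r : R) :=
  forall a, A a -> forall e, 0 < e -> exists b, B b /\ dbar d a b < r + e.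

Lemma hexcess_leP A B r : (hexcess d A B <= r%:E)%E <-> excess_within A B r.
Proof.
split=> [AB a Aa e e0|AB].
  have : (ereal_inf [set (dbar d a b)%:E | b in B] < (r + e)%:E)%E.
    apply: le_lt_trans (_ : r%:E < (r + e)%:E)%E; last by rewrite lte_fin ltrDl.
    by apply: le_trans AB; apply: ereal_sup_ubound; exists a.
  by move=> /ereal_inf_lt [_ [b Bb <-]]; rewrite lte_fin; exists b.
apply: ge_ereal_sup => _ [a Aa <-]; apply/lee_addgt0Pr => e e0.
have [b [Bb ab]] := AB a Aa e e0.
by apply: ge_ereal_inf; exists (dbar d a b)%:E; [exists b|rewrite -EFinD lee_fin ltW].
Qed.

Lemma H_end_leP (f g : X -> R) r : (H_end d f g <= r%:E)%E <->
  excess_within (endo f) (endo g) r /\ excess_within (endo g) (endo f) r.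
Proof.
rewrite /H_end /Hausdorff ge_max.
by split=> [/andP [/hexcess_leP fg /hexcess_leP gf]|[/hexcess_leP -> /hexcess_leP ->]].
Qed.

Lemma excess_within_refl A : excess_within A A 0.
Proof. by move=> a Aa e e0; exists a; rewrite dbar0 add0r. Qed.

Lemma excess_within_trans A B C r s :
  excess_within A B r -> excess_within B C s -> excess_within A C (r + s).
Proof.
move=> AB BC a Aa e e0; have e2 : 0 < e / 2 by rewrite divr_gt0.
have [b [Bb ab]] := AB a Aa _ e2; have [c [Cc bc]] := BC b Bb _ e2.
by exists c; split => //; have := dbarT a b c; lra.
Qed.

Lemma endoE (f : X -> R) x t : endo f (x, t) <-> 0 <= t <= 1 /\ t <= f x.
Proof. by []. Qed.

Lemma endo_bottom (f : X -> R) x : fuzzy_set f -> endo f (x, 0).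
Proof. by move=> /(_ x) /andP [f0 _]; rewrite endoE lexx ler01. Qed.

Lemma excess_within_one (f g : X -> R) : fuzzy_set g -> excess_within (endo f) (endo g) 1.
Proof.
move=> fg [x t] /endoE [/andP [t0 t1] _] e e0; exists (x, 0).
by rewrite dbar_vertical subr0 ger0_norm //; split; [exact: endo_bottom|lra].
Qed.

Lemma FUSCG_fuzzy (u : FUSCG d) : fuzzy_set (sval u).
Proof. by case: u => f [[]]. Qed.

Lemma cut_pos (f : X -> R) a : 0 < a -> cut d f a = [set x | a <= f x].
Proof. by move=> a0; rewrite /cut gt_eqF. Qed.

Lemma FUSCG_top (u : FUSCG d) : exists x, 1 <= sval u x.
Proof.
case: u => f [[_ cuts] _] /=; have [|[x]] := cuts 1; first by rewrite ler01 lexx.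
by rewrite cut_pos // => fx _; exists x.
Qed.

Lemma H_end_FUSCG_ge0 (u v : FUSCG d) : (0 <= H_end_FUSCG u v)%E.
Proof.
rewrite /H_end_FUSCG /H_end /Hausdorff le_max; apply/orP; left.
have [x _] := FUSCG_top u.
apply: le_ereal_sup_tmp.
  exists (ereal_inf [set (dbar d (x, 0) b)%:E | b in endo (sval v)]).
  by exists (x, 0) => //; exact/endo_bottom/FUSCG_fuzzy.
by apply: le_ereal_inf_tmp => _ [b _ <-]; rewrite lee_fin dbar_ge0.
Qed.

Lemma H_end_FUSCG_le1 (u v : FUSCG d) : (H_end_FUSCG u v <= 1%:E)%E.
Proof. by apply/H_end_leP; split; apply/excess_within_one/FUSCG_fuzzy. Qed.

Definition hdist (u v : FUSCG d) : R := fine (H_end_FUSCG u v).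

Lemma hdistE (u v : FUSCG d) : H_end_FUSCG u v = (hdist u v)%:E.
Proof.
rewrite /hdist; have := H_end_FUSCG_ge0 u v; have := H_end_FUSCG_le1 u v.
by case: (H_end_FUSCG u v).
Qed.

Lemma H_end_FUSCGE : @H_end_FUSCG R X d = dE hdist.
Proof. by apply/funext => u; apply/funext => v; exact: hdistE. Qed.

Lemma hdist_leP (u v : FUSCG d) r : hdist u v <= r <->
  excess_within (endo (sval u)) (endo (sval v)) r /\
  excess_within (endo (sval v)) (endo (sval u)) r.
Proof. by rewrite -lee_fin -hdistE; exact: H_end_leP. Qed.

Lemma hdist_ge0 (u v : FUSCG d) : 0 <= hdist u v.
Proof. by rewrite -lee_fin -hdistE; exact: H_end_FUSCG_ge0. Qed.

Lemma hdist_lt_endo (u v : FUSCG d) e : hdist u v < e ->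
  forall a, endo (sval u) a -> exists b, endo (sval v) b /\ dbar d a b < e.
Proof.
move=> uv a ua; have [uv_exc _] := (hdist_leP u v (hdist u v)).1 (lexx _).
have [|b [vb ab]] := uv_exc a ua (e - hdist u v); first by rewrite subr_gt0.
by exists b; split => //; lra.
Qed.

Lemma hdist0 u : hdist u u = 0.
Proof.
apply/eqP; rewrite eq_le hdist_ge0 andbT.
by apply/hdist_leP; split; exact: excess_within_refl.
Qed.

Lemma hdistC u v : hdist u v = hdist v u.
Proof.
by apply/eqP; rewrite eq_le; apply/andP; split; apply/hdist_leP/and_comm/hdist_leP.
Qed.

Lemma hdistT u v w : hdist u w <= hdist u v + hdist v w.
Proof.
have [uv vu] := (hdist_leP u v _).1 (lexx _).
have [vw wv] := (hdist_leP v w _).1 (lexx _).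
apply/hdist_leP; split; first exact: excess_within_trans uv vw.
by rewrite addrC; exact: excess_within_trans wv vu.
Qed.

Lemma UcutP (U : set (FUSCG d)) a x :
  0 < a -> Ucut U a x <-> exists u, U u /\ a <= sval u x.
Proof.
move=> a0; split=> [[u Uu]|[u [Uu ux]]]; last by exists u; rewrite ?cut_pos.
by rewrite cut_pos // => ux; exists u.
Qed.

Lemma Ucut_seq_relcompact (U : set (FUSCG d)) a : 0 < a <= 1 ->
  dseq_relcompact hdist U -> dseq_relcompact d (Ucut U a).
Proof.
move=> /andP [a0 a1] sU x Ux.
have [us hus] := choice (fun n => (UcutP U (x n) a0).1 (Ux n)).
have [u uu] := sU us (fun n => (hus n).1).
have a2 : 0 < a / 2 by rewrite divr_gt0.
have near_cut k : exists ny : nat * X,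
    ((k <= ny.1)%N /\ d (x ny.1) ny.2 < invS k) /\ cut d (sval u) (a / 2) ny.2.
  have [e [e0 ea ek]] := exists_pos_le2 a2 (invS_gt0 k).
  have [n [kn unu]] := uu _ e0 k.
  have : endo (sval (us n)) (x n, a) by rewrite endoE a1 ltW // (hus n).2.
  move=> /(hdist_lt_endo unu) [[y s] [/endoE [_ sy] /dbar_lt [xy as_]]].
  by exists (n, y); split; [split => //; lra|rewrite cut_pos //=; lra].
have [ny hny] := choice near_cut.
have cpt : dcompact (dE d) (cut d (sval u) (a / 2)).
  by apply: (proj2_sig u).2; rewrite a2 /=; lra.
have [z [_ yz]] := dcompact_cluster d0 dC dT cpt (fun k => (hny k).2).
exists z; apply: (dcluster_shadow dT (n := fun k => (ny k).1) _ yz).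
by move=> k; case: (hny k).
Qed.

Lemma grid_level (e t : R) (M : nat) : 0 < e -> 0 <= t -> t < M%:R * e ->
  exists j, (j < M)%N /\ j%:R * e <= t < j%:R * e + e.
Proof.
move=> e0 t0; elim: M => [|M IH]; first by rewrite mul0r; lra.
case: (ltP t (M%:R * e)) => [/IH [j [jM jt]] _|Mt]; first by exists j; rewrite ltnS ltnW.
by rewrite -natr1 mulrDl mul1r => tM; exists M; rewrite Mt tM.
Qed.

Definition grid_code (P : seq X) (M : nat) (e : R) (f : X -> R) :
    {set 'I_(size P) * 'I_M} :=
  [set ij : 'I_(size P) * 'I_M |
    `[< exists x, d (tnth (in_tuple P) ij.1) x < e /\ ij.2%:R * e <= f x >]].

Lemma grid_code_excess (P : seq X) (M : nat) (e : R) (f g : X -> R) :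
  0 < e -> 1 < M%:R * e -> (forall x, e <= f x -> has (fun p => d p x < e) P) ->
  fuzzy_set g -> grid_code P M e f = grid_code P M e g ->
  excess_within (endo f) (endo g) (3 * e).
Proof.
move=> e0 Me net g01 fg [x t] /endoE [/andP [t0 t1] tf] e' e'0.
case: (ltP t e) => [te|et].
  exists (x, 0); rewrite dbar_vertical subr0 ger0_norm //.
  by split; [exact: endo_bottom|lra].
have /(has_nthP x) [i iP xi] := net x (le_trans et tf).
have [j [jM /andP [jt tj]]] := grid_level e0 t0 (le_lt_trans t1 Me).
have : (Ordinal iP, Ordinal jM) \in grid_code P M e f.
  by rewrite inE; apply/asboolP; exists x; rewrite (tnth_nth x) /= (le_trans jt tf).
rewrite fg inE => /asboolP [y []]; rewrite (tnth_nth x) /= => py jy.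
have j0 : 0 <= j%:R * e by rewrite mulr_ge0 // ltW.
exists (y, j%:R * e); split; first by rewrite endoE j0 (le_trans jt t1).
rewrite dbarE ger0_norm ?subr_ge0 //.
by have := dT x (nth x P i) y; rewrite (dC x (nth x P i)); lra.
Qed.

(* There are finitely many codes, and members of [U] with equal codes are
   [3 e]-close. *)
Lemma Ucut_totally_bounded (U : set (FUSCG d)) :
  (forall a, 0 < a <= 1 -> dseq_relcompact d (Ucut U a)) -> dtotally_bounded hdist U.
Proof.
move=> HU r r0; case: (pselect (U !=set0)) => [[u0 Uu0]|U0]; last first.
  by exists [::] => u Uu; case: U0; exists u.
have [e [e0 er e1]] := exists_pos_le2 (divr_gt0 r0 (ltr0n _ 4)) ltr01.
have e01 : 0 < e <= 1 by rewrite e0 e1.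
have [P net] := dseq_relcompact_totally_bounded dC dT (HU e e01) e0.
pose M := Num.bound e^-1.
have Me : 1 < M%:R * e.
  have : 0 <= e^-1 by rewrite invr_ge0 ltW.
  by move=> /archi_boundP; rewrite -ltr_pdivrMr // div1r.
have U_net u : U u -> forall x, e <= sval u x -> has (fun p => d p x < e) P.
  by move=> Uu x ux; apply: net; apply/(UcutP U x e0); exists u.
have rep_spec (c : {set 'I_(size P) * 'I_M}) : exists v, U v /\
    ((exists u, U u /\ grid_code P M e (sval u) = c) -> grid_code P M e (sval v) = c).
  case: (pselect (exists u, U u /\ grid_code P M e (sval u) = c)) => [[u [Uu uc]]|no].
    by exists u.
  by exists u0; split => // ex; case: no.
have [rep hrep] := choice rep_spec.
exists (map rep (enum {set 'I_(size P) * 'I_M})) => u Uu.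
rewrite has_map; apply/hasP; exists (grid_code P M e (sval u)); first by rewrite mem_enum.
have [Uv] := hrep (grid_code P M e (sval u)); set v := rep _ => v_code.
have {}v_code := v_code (ex_intro _ u (conj Uu erefl)).
suff : hdist v u <= 3 * e by rewrite /=; lra.
apply/hdist_leP; split.
  exact: grid_code_excess e0 Me (U_net _ Uv) (FUSCG_fuzzy u) v_code.
exact: grid_code_excess e0 Me (U_net _ Uu) (FUSCG_fuzzy v) (esym v_code).
Qed.

Lemma excess_within_le A B r s : r <= s -> excess_within A B r -> excess_within A B s.
Proof.
by move=> rs AB a Aa e e0; have [b [Bb ab]] := AB a Aa e e0; exists b; split => //; lra.
Qed.

Section EndoLimsup.
Variable us : nat -> FUSCG d.

Definition endo_limsup : set (X * R) := [set p | 0 <= p.2 <= 1 /\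
  forall e, 0 < e -> forall N, exists n, (N <= n)%N /\
    exists q, endo (sval (us n)) q /\ dbar d p q < e].

Lemma endo_limsup_closed p : 0 <= p.2 <= 1 ->
  (forall e, 0 < e -> exists p', endo_limsup p' /\ dbar d p p' < e) -> endo_limsup p.
Proof.
move=> p01 near; split => // e e0 N; have e2 : 0 < e / 2 by rewrite divr_gt0.
have [p' [[_ p'E] pp']] := near _ e2; have [n [Nn [q [uq p'q]]]] := p'E _ e2 N.
by exists n; split => //; exists q; split => //; have := dbarT p p' q; lra.
Qed.

Lemma endo_limsup_down x t s :
  endo_limsup (x, t) -> 0 <= s <= t -> endo_limsup (x, s).
Proof.
move=> [/= /andP [t0 t1] xtE] /andP [s0 st]; split; first by rewrite /= s0 /=; lra.
move=> e e0 N; have [n [Nn [[y r] [/endoE [/andP [r0 r1] ry] xy]]]] := xtE e e0 N.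
exists n; split => //; rewrite dbarE in xy; case: (leP r s) => rs.
  exists (y, r); split; first by rewrite endoE r0 r1.
  by rewrite dbarE !ger0_norm ?subr_ge0 // in xy *; lra.
exists (y, s); split; first by rewrite endoE s0 /=; split; lra.
by rewrite dbarE subrr normr0 addr0; have := normr_ge0 (t - r); lra.
Qed.

Lemma endo_limsup_bottom x : endo_limsup (x, 0).
Proof.
split; first by rewrite /= lexx ler01.
move=> e e0 N; exists N; split => //; exists (x, 0).
by rewrite dbar0; split => //; exact/endo_bottom/FUSCG_fuzzy.
Qed.

Definition limsup_fuzzy (x : X) : R := sup [set t | endo_limsup (x, t)].

Lemma has_sup_endo_limsup x : has_sup [set t | endo_limsup (x, t)].
Proof.
split; first by exists 0; exact: endo_limsup_bottom.
by exists 1 => t [/andP [_ t1] _].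
Qed.

Lemma limsup_fuzzy_ub x t : endo_limsup (x, t) -> t <= limsup_fuzzy x.
Proof. exact: sup_upper_bound (has_sup_endo_limsup x) t. Qed.

Lemma limsup_fuzzy01 : fuzzy_set limsup_fuzzy.
Proof.
move=> x; rewrite (limsup_fuzzy_ub (endo_limsup_bottom x)) /=.
by apply: ge_sup => [|t [/andP [_ t1] _]] //; exists 0; exact: endo_limsup_bottom.
Qed.

Lemma endo_limsup_sup x : endo_limsup (x, limsup_fuzzy x).
Proof.
apply: endo_limsup_closed; first exact: limsup_fuzzy01.
move=> e e0; have [t xt supt] := sup_adherent e0 (has_sup_endo_limsup x).
exists (x, t); split => //; rewrite dbar_vertical ger0_norm ?subr_ge0.
  by rewrite ltrBlDr -ltrBlDl.
exact: limsup_fuzzy_ub.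
Qed.

Lemma endo_limsup_fuzzyE : endo limsup_fuzzy = endo_limsup.
Proof.
apply/seteqP; split=> [[x t] /endoE [/andP [t0 _] tx]|[x t] xt].
  by apply: endo_limsup_down (endo_limsup_sup x) _; rewrite t0.
by rewrite endoE (limsup_fuzzy_ub xt); case: xt.
Qed.

Lemma cut_limsup_fuzzy a :
  0 < a <= 1 -> cut d limsup_fuzzy a = [set x | endo_limsup (x, a)].
Proof.
move=> /andP [a0 a1]; rewrite cut_pos //; apply/seteqP; split => x /=.
  by move=> ax; rewrite -endo_limsup_fuzzyE endoE ax a1 ltW.
exact: limsup_fuzzy_ub.
Qed.

Lemma cut_limsup_closed a :
  0 < a <= 1 -> dclosed (dE d) [set x | endo_limsup (x, a)].
Proof.
move=> /andP [a0 a1] x xa; apply: contrapT => near; apply: xa.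
apply: endo_limsup_closed; first by rewrite /= ltW.
move=> e e0; apply: contrapT => far; apply: near; exists e; split => // y /=.
rewrite dE_ltE => xy ya; apply: far; exists (y, a).
by rewrite dbarE subrr normr0 addr0.
Qed.

Variable U : set (FUSCG d).
Hypotheses (HU : forall a, 0 < a <= 1 -> dseq_relcompact d (Ucut U a))
  (Uus : forall n, U (us n)).

Lemma endo_limsup_top : exists z, endo_limsup (z, 1).
Proof.
have [x ux] := choice (fun n => FUSCG_top (us n)).
have Ux n : Ucut U 1 (x n) by apply/(UcutP U _ ltr01); exists (us n).
have [|z xz] := HU _ Ux; first by rewrite ltr01 lexx.
exists z; split; first by rewrite /= ler01 lexx.
move=> e e0 N; have [n [Nn xnz]] := xz e e0 N.
exists n; split => //; exists (x n, 1); rewrite dbarE subrr normr0 addr0 dC.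
by split => //; rewrite endoE ler01 lexx ux.
Qed.

Lemma cut_limsup_seq_relcompact a :
  0 < a <= 1 -> dseq_relcompact d [set x | endo_limsup (x, a)].
Proof.
move=> /andP [a0 a1] x xa; have a2 : 0 < a / 2 by rewrite divr_gt0.
have near_Ucut k : exists y, Ucut U (a / 2) y /\ d (x k) y < invS k.
  have [e [e0 ea ek]] := exists_pos_le2 a2 (invS_gt0 k).
  have [n [_ [[y s] [/endoE [_ sy] /dbar_lt [xy as_]]]]] := (xa k).2 _ e0 0%N.
  by exists y; split; [apply/(UcutP U y a2); exists (us n); split => //; lra|lra].
have [y hy] := choice near_Ucut.
have [|z yz] := HU _ (fun k => (hy k).1); first by rewrite a2 /=; lra.
by exists z; apply: (dcluster_shadow dT (n := id) _ yz) => k; split => //; case: (hy k).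
Qed.

Lemma limsup_fuzzy_USCG : F_USCG d limsup_fuzzy.
Proof.
have [z z1] := endo_limsup_top; have z_top := limsup_fuzzy_ub z1.
split; [split; first exact: limsup_fuzzy01|].
  move=> a /andP [a0 a1]; have [->|an0] := eqVneq a 0.
    rewrite /cut eqxx; split; last exact: (dclosure_closed dT).
    by exists z; apply: (sub_dclosure d0); rewrite /=; lra.
  have a01 : 0 < a <= 1 by rewrite lt0r an0 a0.
  rewrite cut_limsup_fuzzy //; split; last exact: cut_limsup_closed.
  by exists z; apply: endo_limsup_down z1 _; rewrite a0 a1.
move=> a a01; rewrite cut_limsup_fuzzy // -(dclosed_dclosureE d0 (cut_limsup_closed a01)).
exact/(drelcompact_seqP d0 dC dT)/cut_limsup_seq_relcompact.
Qed.

Definition limsup_FUSCG : FUSCG d := exist _ limsup_fuzzy limsup_fuzzy_USCG.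

Lemma excess_limsup_seq e N :
  (forall m n, (N <= m)%N -> (N <= n)%N -> hdist (us m) (us n) < e) ->
  forall n, (N <= n)%N -> excess_within endo_limsup (endo (sval (us n))) e.
Proof.
move=> us_close n Nn p [_ pE] e' e'0; have e2 : 0 < e' / 2 by rewrite divr_gt0.
have [m [Nm [q [mq pq]]]] := pE _ e2 N.
have [b [nb qb]] := hdist_lt_endo (us_close m n Nm Nn) mq.
by exists b; split => //; have := dbarT p q b; lra.
Qed.

(* A high point of [us n] is shadowed along the tail by points of [U(e)], whose
   cluster point, lowered by [e], lies in the upper limit. *)
Lemma excess_seq_limsup e N : 0 < e <= 1 ->
  (forall m n, (N <= m)%N -> (N <= n)%N -> hdist (us m) (us n) < e) ->
  forall n, (N <= n)%N -> excess_within (endo (sval (us n))) endo_limsup (2 * e).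
Proof.
move=> /andP [e0 e1] us_close n Nn [x t] xt e' e'0.
have /endoE [/andP [t0 t1] tx] := xt.
case: (lerP t (2 * e)) => [te|et].
  exists (x, 0); rewrite dbar_vertical subr0 ger0_norm //.
  by split; [exact: endo_limsup_bottom|lra].
have near_x m : exists y, d x y < e /\ t - e <= sval (us (m + N)) y.
  have := hdist_lt_endo (us_close n (m + N) Nn (leq_addl _ _)) xt.
  by move=> [[y s] [/endoE [_ sy] /dbar_lt [xy ts]]]; exists y; split => //; lra.
have [y hy] := choice near_x.
have Uy m : Ucut U e (y m).
  by apply/(UcutP U _ e0); exists (us (m + N)); split => //; have := (hy m).2; lra.
have [|w yw] := HU _ Uy; first by rewrite e0 e1.
have wE : endo_limsup (w, t - e).
  split; first by rewrite /=; apply/andP; split; lra.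
  move=> e'' e''0 N''; have [m [N''m ymw]] := yw _ e''0 N''.
  exists (m + N); split; first exact: leq_trans N''m (leq_addr _ _).
  exists (y m, t - e); rewrite dbarE subrr normr0 addr0 dC; split => //.
  by rewrite endoE; split; [apply/andP; split; lra|exact: (hy m).2].
exists (w, t - e); split => //; have [m [_ ymw]] := yw _ e'0 0%N.
have -> : dbar d (x, t) (w, t - e) = d x w + e.
  by rewrite dbarE (_ : t - (t - e) = e) ?ger0_norm ?ltW //; lra.
by have := dT x (y m) w; have := (hy m).1; lra.
Qed.

Hypothesis us_cauchy : dcauchy hdist us.

Lemma limsup_FUSCG_cvg : dcvg hdist us limsup_FUSCG.
Proof.
move=> e e0; have [e' [e'0 e'e e'1]] := exists_pos_le2 (divr_gt0 e0 (ltr0n _ 3)) ltr01.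
have [N us_close] := us_cauchy e'0; exists N => n Nn.
suff : hdist (us n) limsup_FUSCG <= 2 * e' by lra.
apply/hdist_leP; rewrite /= endo_limsup_fuzzyE; split.
  by apply: excess_seq_limsup us_close _ Nn; rewrite e'0 e'1.
by apply: excess_within_le (excess_limsup_seq us_close Nn); lra.
Qed.

End EndoLimsup.

Lemma Ucut_complete (U : set (FUSCG d)) :
  (forall a, 0 < a <= 1 -> dseq_relcompact d (Ucut U a)) -> dcomplete_in hdist U.
Proof.
by move=> HU us Uus us_cauchy; exists (limsup_FUSCG HU Uus); exact: limsup_FUSCG_cvg.
Qed.

Lemma FUSCG_relcompactP (U : set (FUSCG d)) :
  drelcompact (@H_end_FUSCG R X d) U <->
  (forall a, 0 < a <= 1 -> drelcompact (dE d) (Ucut U a)).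
Proof.
rewrite H_end_FUSCGE; split=> [/(drelcompact_seq hdist0 hdistC hdistT) sU a a01|HU].
  by apply/(drelcompact_seqP d0 dC dT); exact: Ucut_seq_relcompact.
have {}HU a a01 : dseq_relcompact d (Ucut U a) := drelcompact_seq d0 dC dT (HU a a01).
apply: (dtotally_bounded_complete_relcompact hdistC hdistT).
  exact: Ucut_totally_bounded.
exact: Ucut_complete.
Qed.

End Endographs.

Unset Implicit Arguments.

Theorem theorem5p9 (R : realType) (X : Type) (d : X -> X -> R)
  (hd : is_metric d) (U : set (FUSCG d)) :
  drelcompact (@H_end_FUSCG R X d) U <->
  (forall a : R, 0 < a <= 1 -> drelcompact (dE d) (Ucut U a)).
Proof.
have [d_eq0 [dC dT]] := hd.
exact: FUSCG_relcompactP (fun x => (d_eq0 x x).2 erefl) dC dT U.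
Qed.
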